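(* Let $k, D, N$ be positive integers, let $G \subseteq S_k$ be a permutation group (a subgroup of the symmetric group on $\{1,\dots,k\}$), let $\Theta \in \mathbb{R}^{D \times D \times \dots \times D}$ be a real tensor of rank (order) $k$, and let $X \in \mathbb{R}^{N \times D}$, with entries $X^{j}_{i}$ for $1 \le j \le N$, $1 \le i \le D$. Define the order-$k$ tensor $\mathcal{S} \in \mathbb{R}^{D\times\dots\times D}$ by $$\mathcal{S}^{i_1 i_2 \dots i_k} = \sum_{\sigma \in G} \Theta^{i_{\sigma(1)} i_{\sigma(2)} \dots i_{\sigma(k)}},$$ the order-$k$ tensor $\mathcal{O} \in \mathbb{R}^{N\times\dots\times N}$ by $$\mathcal{O}^{j_1 j_2 \dots j_k} = \sum_{i_1,\dots,i_k=1}^{D} X^{j_1}_{i_1} X^{j_2}_{i_2} \cdots X^{j_k}_{i_k}\, \mathcal{S}^{i_1 i_2 \dots i_k},$$ and the order-$k$ tensor $\mathcal{P} \in \mathbb{R}^{N\times\dots\times N}$ by $$\mathcal{P}^{j_1 j_2 \dots j_k} = \frac{\exp\left(\mathcal{O}^{j_1 j_2 \dots j_k}\right)}{\sum_{l_1, \dots, l_k=1}^{N} \exp\left(\mathcal{O}^{l_1 l_2 \dots l_k}\right)}.$$ Then $\mathcal{P}$ is $G$-symmetric, i.e. for every $\sigma \in G$ and all indices $j_1,\dots,j_k \in \{1,\dots,N\}$, $$\mathcal{P}^{j_1 j_2 \dots j_k} = \mathcal{P}^{j_{\sigma(1)} j_{\sigma(2)} \dots j_{\sigma(k)}}.$$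
   Context: Tensors are indexed by superscripts; for an order-$k$ tensor $T$ and a permutation $\sigma \in S_k$, $T^{i_{\sigma(1)} \dots i_{\sigma(k)}}$ denotes the entry of $T$ whose $m$-th index is $i_{\sigma(m)}$. *)

From HB Require Import structures.
From mathcomp Require Import all_boot all_order all_algebra all_fingroup.
From mathcomp Require Import all_classical all_reals all_analysis.
Set Implicit Arguments. Unset Strict Implicit. Unset Printing Implicit Defensive.
Import Order.TTheory GRing.Theory Num.Theory.
Local Open Scope ring_scope.

Definition midx (k n : nat) := {ffun 'I_k -> 'I_n}.

Definition tensor (R : Type) (k n : nat) := midx k n -> R.

Definition permidx (k n : nat) (s : 'S_k) (i : midx k n) : midx k n :=
  [ffun m => i (s m)].

Definition symS (R : realType) (k D : nat) (G : {group 'S_k})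
  (Theta : tensor R k D) : tensor R k D :=
  fun i => \sum_(s in G) Theta (permidx s i).

Definition tensO (R : realType) (k D N : nat) (G : {group 'S_k})
  (Theta : tensor R k D) (X : 'M[R]_(N, D)) : tensor R k N :=
  fun j => \sum_(i : midx k D) (\prod_(m < k) X (j m) (i m)) * symS G Theta i.

Definition tensP (R : realType) (k D N : nat) (G : {group 'S_k})
  (Theta : tensor R k D) (X : 'M[R]_(N, D)) : tensor R k N :=
  fun j => expR (tensO G Theta X j) / \sum_(l : midx k N) expR (tensO G Theta X l).

From HB Require Import structures.
From mathcomp Require Import all_boot all_order all_algebra all_fingroup.
From mathcomp Require Import all_classical all_reals all_analysis.
Local Open Scope ring_scope.
Import GRing.Theory.

(* S is G-invariant because reindexing a sum over G by a translation in G does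
   not change it. Reindexing the sum over multi-indices i defining O by sigma
   (a bijection of multi-indices) permutes the factors of each product of
   entries of X in the same way, so O inherits the G-invariance of S; finally
   P^j depends on j only through O^j. *)

Lemma permidxM (k n : nat) (s t : 'S_k) (i : midx k n) :
  permidx t (permidx s i) = permidx (t * s)%g i.
Proof. by apply/ffunP => m; rewrite !ffunE permM. Qed.

Lemma permidx1 (k n : nat) (i : midx k n) : permidx 1%g i = i.
Proof. by apply/ffunP => m; rewrite ffunE perm1. Qed.

Lemma permidx_bij (k n : nat) (s : 'S_k) : bijective (@permidx k n s).
Proof.
by exists (permidx s^-1%g) => i; rewrite permidxM ?mulVg ?mulgV permidx1.
Qed.

Lemma symS_permidx (R : realType) (k D : nat) (G : {group 'S_k})
    (Theta : tensor R k D) (s : 'S_k) (i : midx k D) :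
  s \in G -> symS G Theta (permidx s i) = symS G Theta i.
Proof.
move=> sG; rewrite /symS.
under eq_bigr do rewrite permidxM.
rewrite [RHS](reindex_inj (mulIg s)) /=.
by apply: eq_bigl => t; rewrite groupMr.
Qed.

Lemma contract_permidx (R : realType) (k D N : nat) (S : tensor R k D)
    (X : 'M[R]_(N, D)) (s : 'S_k) (j : midx k N) :
  (forall i, S (permidx s i) = S i) ->
  \sum_(i : midx k D) (\prod_(m < k) X (permidx s j m) (i m)) * S i
  = \sum_(i : midx k D) (\prod_(m < k) X (j m) (i m)) * S i.
Proof.
move=> S_s; rewrite (reindex _ (onW_bij _ (@permidx_bij k D s))) /=.
apply: eq_bigr => i _; rewrite S_s; congr (_ * _).
rewrite [RHS](reindex_inj (@perm_inj _ s)) /=.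
by apply: eq_bigr => m _; rewrite !ffunE.
Qed.

Lemma tensO_permidx (R : realType) (k D N : nat) (G : {group 'S_k})
    (Theta : tensor R k D) (X : 'M[R]_(N, D)) (s : 'S_k) (j : midx k N) :
  s \in G -> tensO G Theta X (permidx s j) = tensO G Theta X j.
Proof. by move=> sG; apply: contract_permidx => i; apply: symS_permidx. Qed.

Theorem theorem9p1 (R : realType) (k D N : nat)
  (hk : (0 < k)%N) (hD : (0 < D)%N) (hN : (0 < N)%N)
  (G : {group 'S_k}) (Theta : tensor R k D) (X : 'M[R]_(N, D)) :
  forall (s : 'S_k), s \in G -> forall j : midx k N,
    tensP G Theta X j = tensP G Theta X (permidx s j).
Proof. by move=> s sG j; rewrite /tensP tensO_permidx. Qed.
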